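(* Let $i,j\in\{1,\dots,N\}$ and let $m\ge 0$ be an integer. If $m<\delta_{ji}$ (with $\delta_{ji}=\infty$ if there is no directed path from $j$ to $i$), then $\big((-L)^m\big)_{ij}=0$. If $m=\delta_{ji}<\infty$, then $\big((-L)^m\big)_{ij}$ equals the sum of the weights of all shortest directed paths from $j$ to $i$, and this number equals $\vartheta(\mathcal F_m^{j\to i})$.
   Context: Let $\mathcal G$ be a weighted directed graph on the vertex set $\{1,\dots,N\}$ with adjacency matrix $A=[a_{ij}]$, where $a_{ij}>0$ if there is an arc from vertex $j$ to vertex $i$ and $a_{ij}=0$ otherwise; there are no self-loops, so $a_{ii}=0$. The weight of the arc from $j$ to $i$ is $a_{ij}$. The Laplacian is $L=D-A$, where $D=\mathrm{diag}\big(\sum_{j}a_{1j},\dots,\sum_j a_{Nj}\big)$. A directed path from $u$ to $w$ is a sequence of pairwise distinct vertices $u=v_0,v_1,\dots,v_\ell=w$ such that there is an arc from $v_k$ to $v_{k+1}$ for each $k$. Its length is $\ell$, and its weight is the product of the weights of its arcs (the empty product is $1$). The distance $\delta_{uw}$ is the length of a shortest directed path from $u$ to $w$. A diverging (out-)tree is a set of arcs on a vertex subset that has a root vertex of in-degree $0$, has every other vertex of in-degree exactly $1$, and has a directed path from the root to every vertex of the subset. A spanning diverging forest is a set of arcs of $\mathcal G$ such that the vertex set $\{1,\dots,N\}$ is partitioned into vertex-disjoint diverging trees formed by these arcs; isolated vertices are trivial trees. The weight of a forest is the product of the weights of its arcs. For vertices $u,w$ and an integer $k\ge0$, $\mathcal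 F_k^{u\to w}$ denotes the set of all spanning diverging forests with exactly $k$ arcs in which $u$ is the root of a tree that contains $w$. The quantity $\vartheta(\mathcal F_k^{u\to w})$ is the sum of the weights of the forests in $\mathcal F_k^{u\to w}$. *)

From HB Require Import structures.
From mathcomp Require Import all_boot all_order all_algebra.
Set Implicit Arguments. Unset Strict Implicit. Unset Printing Implicit Defensive.
Import Order.TTheory GRing.Theory Num.Theory.
Local Open Scope ring_scope.

Section Graph.
Variables (R : realFieldType) (N : nat) (A : 'M[R]_N).

Definition arc (x y : 'I_N) : bool := 0 < A y x.

Definition laplacian : 'M[R]_N :=
  \matrix_(i, k) ((i == k)%:R * (\sum_l A i l) - A i k).

(* A directed path u = v_0, v_1, ..., v_l = w is encoded by u and the
   sequence s = [:: v_1; ...; v_l]; its length is size s. *)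
Definition is_dpath (u w : 'I_N) (s : seq 'I_N) : bool :=
  [&& uniq (u :: s), path arc u s & last u s == w].

Fixpoint pweight (u : 'I_N) (s : seq 'I_N) : R :=
  match s with
  | [::] => 1
  | v :: s' => A v u * pweight v s'
  end.

(* Arc sets are sets of pairs (x, y) meaning the arc from x to y. *)
Definition indeg (F : {set 'I_N * 'I_N}) (B : {set 'I_N}) (v : 'I_N) : nat :=
  #|[set x in B | (x, v) \in F]|.

Definition is_dtree (F : {set 'I_N * 'I_N}) (B : {set 'I_N}) (r : 'I_N) : bool :=
  [&& r \in B, indeg F B r == 0%N,
      [forall v in B, (v != r) ==> (indeg F B v == 1%N)] &
      [forall v in B,
         connect (fun x y => [&& (x, y) \in F, x \in B & y \in B]) r v]].

Definition forest_partition (F : {set 'I_N * 'I_N}) (P : {set {set 'I_N}}) : bool :=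
  [&& partition P [set: 'I_N],
      [forall e in F, [exists B in P, (e.1 \in B) && (e.2 \in B)]] &
      [forall B in P, [exists r, is_dtree F B r]]].

Definition is_sdforest (F : {set 'I_N * 'I_N}) : bool :=
  [forall e in F, arc e.1 e.2] && [exists P, forest_partition F P].

Definition in_Fk (k : nat) (u w : 'I_N) (F : {set 'I_N * 'I_N}) : bool :=
  [&& [forall e in F, arc e.1 e.2], #|F| == k &
      [exists P, forest_partition F P &&
         [exists B in P, [&& u \in B, w \in B & is_dtree F B u]]]].

Definition fweight (F : {set 'I_N * 'I_N}) : R := \prod_(e in F) A e.2 e.1.

Definition theta (k : nat) (u w : 'I_N) : R :=
  \sum_(F : {set 'I_N * 'I_N} | in_Fk k u w F) fweight F.

End Graph.

Definition mxpow (R : realFieldType) (N : nat) (M : 'M[R]_N) (m : nat) : 'M[R]_N :=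
  iter m (mulmx M) 1%:M.

From Pilot Require Import Defs.
From HB Require Import structures.
From mathcomp Require Import all_boot all_order all_algebra.
Import Order.TTheory GRing.Theory Num.Theory.

Set Implicit Arguments.
Unset Strict Implicit.
Unset Printing Implicit Defensive.

(* The off-diagonal entries of -L are the arc weights. Expanding
   ((-L)^(m+1))_ij = sum_k ((-L)^m)_ik (-L)_kj by induction on m shows that, as
   long as no directed path from j to i is shorter than m, ((-L)^m)_ij is the total
   weight of the directed paths of length m: the diagonal term k = j vanishes since
   there is then no path from j to i of length at most m, and after a first arc
   j -> k a path from k to i of length m cannot revisit j, as that would give a
   shorter path. A forest of F_m^{j -> i} contains a path from j to i in the tree
   rooted at j; when no path is shorter than m that path uses all m arcs, so these
   forests are exactly the arc sets of the shortest paths, with the same weights. *)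

Section PathArcs.
Variable T : eqType.
Implicit Types (u x y : T) (s : seq T).

Lemma mem_pairmap_pair u s x y :
  (x, y) \in pairmap pair u s -> x \in u :: s /\ y \in s.
Proof.
elim: s u => [|v s IHs] u //=; rewrite in_cons => /orP [/eqP [-> ->]|/IHs [xs ys]].
  by rewrite !inE !eqxx.
by rewrite xs orbT in_cons ys orbT.
Qed.

Lemma uniq_pairmap_pair u s : uniq (u :: s) -> uniq (pairmap pair u s).
Proof.
elim: s u => [|v s IHs] u //= /andP [uNvs vs_uniq]; rewrite IHs // andbT.
by apply/negP => /mem_pairmap_pair [uvs _]; rewrite uvs in uNvs.
Qed.

Lemma path_pairmap_pair (e : rel T) u s :
  path e u s = all (fun p => e p.1 p.2) (pairmap pair u s).
Proof. by elim: s u => [|v s IHs] u //=; rewrite IHs. Qed.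

Lemma pairmap_pair_pred u s y : uniq (u :: s) -> y \in s ->
  exists2 x, x \in u :: s & forall x', ((x', y) \in pairmap pair u s) = (x' == x).
Proof.
elim: s u => [|v s IHs] u //= /andP [uNvs vs_uniq]; rewrite in_cons.
case/orP => [/eqP ->|ys].
  exists u => [|x']; first exact: mem_head.
  rewrite in_cons xpair_eqE eqxx andbT; case: eqP => //= _.
  by apply/negP => /mem_pairmap_pair [_ vs]; case/andP: vs_uniq => /negP.
have [x xvs Hx] := IHs v vs_uniq ys.
exists x => [|x']; first by rewrite in_cons xvs orbT.
rewrite in_cons Hx xpair_eqE; case: (y =P v) => [yv|]; last by rewrite andbF.
by case/andP: vs_uniq; rewrite -yv ys.
Qed.

Lemma pairmap_pair_inj u s s' : uniq (u :: s) -> uniq (u :: s') ->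
  pairmap pair u s =i pairmap pair u s' -> s = s'.
Proof.
elim: s u s' => [|v s IHs] u [|w s'] //= s_uniq s'_uniq eq_arcs.
- by have := eq_arcs (u, w); rewrite mem_head.
- by have := eq_arcs (u, v); rewrite mem_head.
have: (u, v) \in (u, w) :: pairmap pair w s'.
  by rewrite -eq_arcs mem_head.
rewrite in_cons => /orP [/eqP [vw]|/mem_pairmap_pair [uws' _]]; last first.
  by case/andP: s'_uniq; rewrite uws'.
subst w.
case/andP: s_uniq => uNvs vs_uniq; case/andP: s'_uniq => uNvs' vs'_uniq.
congr cons; apply: (IHs v s' vs_uniq vs'_uniq) => e.
have drop_head t : u \notin v :: t ->
    (e \in pairmap pair v t) = (e \in (u, v) :: pairmap pair v t) && (e != (u, v)).
  move=> uNvt; rewrite in_cons; case: eqP => [->|] /=; last by rewrite andbT.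
  by apply/negP => /mem_pairmap_pair [uvt _]; rewrite uvt in uNvt.
by rewrite drop_head // eq_arcs -drop_head.
Qed.

End PathArcs.

Lemma big_tuple_cons (R : Type) (idx : R) (op : Monoid.com_law idx)
    (T : finType) n (F : n.+1.-tuple T -> R) :
  \big[op/idx]_(t : n.+1.-tuple T) F t
    = \big[op/idx]_(k : T) \big[op/idx]_(t : n.-tuple T) F [tuple of k :: t].
Proof.
rewrite pair_big (reindex (fun p : T * n.-tuple T => [tuple of p.1 :: p.2])) //.
exists (fun t => (thead t, [tuple of behead t])) => [[k t]|t] _ /=.
  by congr pair; apply: val_inj.
by rewrite [RHS]tuple_eta.
Qed.

Local Open Scope ring_scope.

Lemma mxpowSr (R : realFieldType) (N : nat) (M : 'M[R]_N) m :
  mxpow M m.+1 = mxpow M m *m M.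
Proof.
rewrite /mxpow; elim: m => [|m IHm]; first by rewrite /= mulmx1 mul1mx.
by rewrite [LHS]iterS {1}IHm mulmxA.
Qed.

Section ShortestPaths.
Variables (R : realFieldType) (N : nat) (A : 'M[R]_N).
Hypotheses (A_nneg : forall i j, 0 <= A i j) (A_diag : forall i, A i i = 0).
Implicit Types (i j k : 'I_N) (s t : seq 'I_N).

Definition dist_ge j i m := forall s, is_dpath A j i s -> (m <= size s)%N.

Lemma dpath_cons j i k t :
  is_dpath A j i (k :: t) = [&& j \notin k :: t, Defs.arc A j k & is_dpath A k i t].
Proof.
rewrite /is_dpath /=.
by case: (j \notin _); case: (k \in t); case: (uniq t); case: (Defs.arc A j k).
Qed.

Lemma dpath_shorten j i s : path (Defs.arc A) j s -> last j s = i ->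
  exists2 s', is_dpath A j i s' & (size s' <= size s)%N.
Proof.
move=> s_path <-; case/shortenP: s_path => s' s'_path s'_uniq s'_sub; exists s'.
  by rewrite /is_dpath s'_uniq s'_path eqxx.
by apply: uniq_leq_size => [|x /s'_sub]; [case/andP: s'_uniq | ].
Qed.

Lemma dpath_suffix k i t x : is_dpath A k i t -> x \in t ->
  exists2 s, is_dpath A x i s & (size s < size t)%N.
Proof.
move=> /and3P [+ + +] xt; case/splitPr: xt => t1 t2.
rewrite -cat_cons cat_uniq cat_path last_cat size_cat /=.
move=> /and3P [_ _ /andP [xNt2 t2_uniq]] /and3P [_ _ t2_path] t2_last; exists t2.
  by rewrite /is_dpath /= xNt2 t2_uniq t2_path.
by rewrite addnS ltnS leq_addl.
Qed.

Lemma dist_ge_arc j i k m : dist_ge j i m.+1 -> Defs.arc A j k -> dist_ge k i m.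
Proof.
move=> dist_ji jk s /and3P [_ s_path /eqP s_last].
have [s' s'_dpath s'_size] : exists2 s', is_dpath A j i s' & (size s' <= (size s).+1)%N.
  by apply: (@dpath_shorten j i (k :: s)); rewrite /= ?jk.
by rewrite -ltnS (leq_trans (dist_ji s' s'_dpath) s'_size).
Qed.

Lemma dpath_cons_dist j i k t : dist_ge j i (size t).+1 -> Defs.arc A j k ->
  is_dpath A j i (k :: t) = is_dpath A k i t.
Proof.
move=> dist_ji jk; rewrite dpath_cons jk andbC /=.
case t_dpath: (is_dpath A k i t) => //=; rewrite in_cons negb_or.
apply/andP; split.
  by apply: contraTneq jk => ->; rewrite /Defs.arc A_diag ltxx.
apply/negP => /(dpath_suffix t_dpath) [s s_dpath].
by rewrite ltnNge (ltnW (dist_ji s s_dpath)).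
Qed.

Lemma sum_dpath_eq0 j i m : dist_ge j i m.+1 ->
  \sum_(t : m.-tuple 'I_N | is_dpath A j i t) pweight A j t = 0.
Proof. by move=> dist_ji; apply: big1 => t /dist_ji; rewrite size_tuple ltnn. Qed.

Lemma neg_laplacian_offdiag k j : k != j -> (- laplacian A) k j = A k j.
Proof. by move=> kj; rewrite !mxE (negbTE kj) mul0r add0r opprK. Qed.

Lemma Narc_eq0 j k : ~~ Defs.arc A j k -> A k j = 0.
Proof. by rewrite /Defs.arc lt_def A_nneg andbT negbK => /eqP. Qed.

Lemma mxpow_neg_laplacian m i j : dist_ge j i m ->
  mxpow (- laplacian A) m i j = \sum_(t : m.-tuple 'I_N | is_dpath A j i t) pweight A j t.
Proof.
elim: m i j => [|m IHm] i j dist_ji.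
  rewrite mxE big_mkcond (big_pred1 [tuple]) => [|t]; last by apply/esym/eqP/tuple0.
  by rewrite /is_dpath /= eq_sym; case: (j == i).
rewrite mxpowSr mxE [RHS]big_mkcond big_tuple_cons; apply: eq_bigr => k _.
have [->|kj] := eqVneq k j.
  rewrite IHm; last by move=> s /dist_ji /ltnW.
  rewrite sum_dpath_eq0 // mul0r big1 // => t _.
  by rewrite dpath_cons mem_head.
rewrite neg_laplacian_offdiag //.
have [jk|Njk] := boolP (Defs.arc A j k); last first.
  by rewrite Narc_eq0 // mulr0 big1 // => t _; rewrite dpath_cons (negbTE Njk) andbF.
rewrite IHm; last exact: dist_ge_arc dist_ji jk.
rewrite mulr_suml big_mkcond; apply: eq_bigr => t _ /=.
rewrite dpath_cons_dist ?size_tuple //.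
by case: (is_dpath A k i t); rewrite ?mul0r // mulrC.
Qed.

End ShortestPaths.

Section PathForest.
Variable N : nat.
Implicit Types (j x : 'I_N) (t : seq 'I_N).

Definition path_forest j t : {set 'I_N * 'I_N} := [set e in pairmap pair j t].

Lemma card_path_forest j t : uniq (j :: t) -> #|path_forest j t| = size t.
Proof.
by move=> jt_uniq; rewrite cardsE (card_uniqP (uniq_pairmap_pair jt_uniq)) size_pairmap.
Qed.

Lemma dtree_path_forest j t : uniq (j :: t) ->
  is_dtree (path_forest j t) [set v in j :: t] j.
Proof.
move=> jt_uniq; apply/and4P; split.
- by rewrite inE mem_head.
- rewrite /indeg cards_eq0; apply/eqP/setP => x; rewrite !inE.
  apply/negP => /andP [_ /mem_pairmap_pair [_ jt]].
  by case/andP: jt_uniq; rewrite jt.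
- apply/forall_inP => v; rewrite inE in_cons => /predU1P [->|vt]; first by rewrite eqxx.
  have [x xjt Hx] := pairmap_pair_pred jt_uniq vt.
  rewrite /indeg (_ : [set _ in _ | _] = [set x]) ?cards1 ?implybT //.
  apply/setP => y; rewrite !inE Hx.
  by case: (y =P x) => [->|]; rewrite ?andbF ?andbT.
- apply/forall_inP => v; rewrite inE => vjt.
  apply: (path_connect (p := t)) => //.
  rewrite path_pairmap_pair; apply/allP => -[x y] xy_arc /=.
  have [xjt yt] := mem_pairmap_pair xy_arc.
  by rewrite !in_set xy_arc xjt in_cons yt orbT.
Qed.

Lemma dtree_path_forest_singleton j t x : x \notin j :: t ->
  is_dtree (path_forest j t) [set x] x.
Proof.
move=> xNjt; apply/and4P; split.
- by rewrite set11.
- rewrite /indeg cards_eq0; apply/eqP/setP => y; rewrite !inE.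
  apply/negP => /andP [/eqP -> /mem_pairmap_pair [xjt _]].
  by rewrite xjt in xNjt.
- by apply/forall_inP => v; rewrite inE => /eqP ->; rewrite eqxx.
- by apply/forall_inP => v; rewrite inE => /eqP ->; apply: connect0.
Qed.

(* The vertices of the path form one block, every other vertex is a singleton. *)
Definition path_partition j t : {set {set 'I_N}} :=
  preim_partition (fun v => if v \in j :: t then j else v) [set: 'I_N].

Lemma path_partition_block j t x :
  [set y in [set: 'I_N] | (if x \in j :: t then j else x) == (if y \in j :: t then j else y)]
    = if x \in j :: t then [set v in j :: t] else [set x].
Proof.
apply/setP => y; rewrite in_set in_setT /=.
have [xjt|xNjt] := boolP (x \in j :: t); have [yjt|yNjt] := boolP (y \in j :: t).
- by rewrite in_set yjt eqxx.
- by rewrite in_set (negbTE yNjt); apply: contraNF yNjt => /eqP <-; rewrite mem_head.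
- have xNj : x != j by apply: contraNneq xNjt => ->; rewrite mem_head.
  have yNx : y != x by apply: contraNneq xNjt => <-.
  by rewrite in_set1 (negbTE xNj) (negbTE yNx).
- by rewrite in_set1 eq_sym.
Qed.

Lemma path_block_in_partition j t : [set v in j :: t] \in path_partition j t.
Proof. by apply/imsetP; exists j => //; rewrite path_partition_block mem_head. Qed.

Lemma forest_partition_path j t : uniq (j :: t) ->
  forest_partition (path_forest j t) (path_partition j t).
Proof.
move=> jt_uniq; apply/and3P; split; first exact: preim_partitionP.
  apply/forall_inP => -[x y]; rewrite inE => /mem_pairmap_pair [xjt yt].
  apply/exists_inP; exists [set v in j :: t]; first exact: path_block_in_partition.
  by rewrite !in_set xjt in_cons yt orbT.
apply/forall_inP => _ /imsetP [x _ ->]; apply/existsP; rewrite path_partition_block.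
case: ifP => [_|/negbT xNjt]; first by exists j; apply: dtree_path_forest.
by exists x; apply: dtree_path_forest_singleton.
Qed.

End PathForest.

Section ShortestPathForests.
Variables (R : realFieldType) (N : nat) (A : 'M[R]_N).
Implicit Types (i j : 'I_N) (t : seq 'I_N).

Lemma pweight_pairmap j t : pweight A j t = \prod_(e <- pairmap pair j t) A e.2 e.1.
Proof. by elim: t j => [|v t IHt] j /=; rewrite ?big_nil // big_cons IHt. Qed.

Lemma fweight_path_forest j t : uniq (j :: t) -> fweight A (path_forest j t) = pweight A j t.
Proof.
move=> jt_uniq; rewrite pweight_pairmap (big_uniq _ (uniq_pairmap_pair jt_uniq)).
by apply: eq_bigl => e; rewrite inE.
Qed.

Lemma in_Fk_path_forest j i t : is_dpath A j i t -> in_Fk A (size t) j i (path_forest j t).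
Proof.
case/and3P=> jt_uniq jt_path /eqP jt_last; apply/and3P; split.
- apply/forall_inP => -[x y]; rewrite inE => xy_arc.
  by move: jt_path; rewrite path_pairmap_pair => /allP /(_ _ xy_arc).
- by rewrite card_path_forest.
apply/existsP; exists (path_partition j t); rewrite forest_partition_path //=.
apply/exists_inP; exists [set v in j :: t]; first exact: path_block_in_partition.
by rewrite !in_set mem_head -jt_last mem_last dtree_path_forest.
Qed.

(* A forest of F_m^{j -> i} contains a path from j to i; when no such path is
   shorter than m, that path already uses all m arcs of the forest. *)
Lemma in_Fk_dist_ge j i m F : dist_ge A j i m -> in_Fk A m j i F ->
  exists2 t : m.-tuple 'I_N, is_dpath A j i t & F = path_forest j t.
Proof.
move=> dist_ji /and3P [F_arcs /eqP F_card /existsP [P /andP [_]]].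
case/exists_inP=> B _ /and3P [_ iB /and4P [_ _ _ /forall_inP /(_ i iB)]].
case/connectP=> s s_path s_last.
case/shortenP: s_path s_last => t t_path jt_uniq _ t_last.
have t_sub : {subset pairmap pair j t <= F}.
  by move: t_path; rewrite path_pairmap_pair => /allP t_arcs [x y] /t_arcs /and3P [].
have t_dpath : is_dpath A j i t.
  rewrite /is_dpath jt_uniq -t_last eqxx andbT path_pairmap_pair.
  by apply/allP => e /t_sub; apply: (forall_inP F_arcs).
have sub_F : path_forest j t \subset F by apply/subsetP => e; rewrite inE => /t_sub.
have t_size : size t == m.
  rewrite eqn_leq dist_ji // andbT -F_card -(card_path_forest jt_uniq).
  exact: subset_leq_card.
exists (Tuple t_size) => //=; apply/esym/eqP.
by rewrite eqEcard sub_F card_path_forest // F_card (eqP t_size) /=.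
Qed.

Lemma theta_dist_ge j i m : dist_ge A j i m ->
  theta A m j i = \sum_(t : m.-tuple 'I_N | is_dpath A j i t) pweight A j t.
Proof.
move=> dist_ji; pose D := [set t : m.-tuple 'I_N | is_dpath A j i t].
pose forest_of (t : m.-tuple 'I_N) := path_forest j t.
have forest_of_inj : {in D &, injective forest_of}.
  move=> t1 t2; rewrite !inE => /and3P [t1_uniq _ _] /and3P [t2_uniq _ _] /setP eq_t12.
  apply/val_inj/(pairmap_pair_inj t1_uniq t2_uniq) => e.
  by have := eq_t12 e; rewrite !inE.
have in_FkE F : in_Fk A m j i F = (F \in forest_of @: D).
  apply/idP/imsetP => [/(in_Fk_dist_ge dist_ji) [t t_dpath ->]|[t]].
    by exists t; rewrite ?inE.
  by rewrite inE => t_dpath ->; rewrite -{1}(size_tuple t) in_Fk_path_forest.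
rewrite /theta (eq_bigl _ _ in_FkE) big_imset //= big_set /=.
by apply: eq_bigr => t /and3P [t_uniq _ _]; rewrite fweight_path_forest.
Qed.

End ShortestPathForests.

Theorem lemma1 (R : realFieldType) (N : nat) (A : 'M[R]_N)
  (A_nneg : forall i j, 0 <= A i j) (A_diag : forall i, A i i = 0)
  (i j : 'I_N) (m : nat) :
  ((forall s : seq 'I_N, is_dpath A j i s -> (m < size s)%N) ->
     mxpow (- laplacian A) m i j = 0)
  /\
  ((exists s : seq 'I_N, is_dpath A j i s /\ size s = m) ->
   (forall s : seq 'I_N, is_dpath A j i s -> (m <= size s)%N) ->
     mxpow (- laplacian A) m i j
       = \sum_(t : m.-tuple 'I_N | is_dpath A j i t) pweight A j t
     /\ \sum_(t : m.-tuple 'I_N | is_dpath A j i t) pweight A j t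
       = theta A m j i).
Proof.
split=> [dist_ji|_ dist_ji].
  rewrite mxpow_neg_laplacian // => [|s /dist_ji /ltnW //].
  exact: sum_dpath_eq0.
by rewrite mxpow_neg_laplacian // theta_dist_ge.
Qed.
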